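(* Let $\varphi=\mathrm{Parity}(\{0,1\})$ be the co-Büchi objective. There exists an infinitely branching (countable) MDP $\mathcal M$ with a color function $\mathit{Col}:S\to\{0,1\}$ and an initial state $s$ such that (i) for every FR-strategy $\sigma$ we have $\mathcal P_{\mathcal M,s,\sigma}(\varphi)=0$, and (ii) there exists an HD-strategy $\sigma$ such that $\mathcal P_{\mathcal M,s,\sigma}(\varphi)=1$. Hence optimal (and even almost-surely winning) strategies and $\epsilon$-optimal strategies for co-Büchi require infinite memory (i.e., cannot in general be chosen FR).
   Context: An MDP is $\mathcal M=\langle S,S_\Box,S_\circ,\longrightarrow,P\rangle$ where $S$ is a countable set of states partitioned into player states $S_\Box$ and random states $S_\circ$, $\longrightarrow\subseteq S\times S$ is a transition relation in which every state has at least one successor, and $P$ assigns to each random state a probability distribution over its successors. $\mathcal M$ is finitely branching if every state has finitely many successors, otherwise infinitely branching. A play is an infinite sequence $s_0s_1\cdots$ with $s_i\longrightarrow s_{i+1}$ for all $i$. A strategy is a function $\sigma:S^*S_\Box\to\mathcal D(S)$ assigning to each partial play ending in a player state $s$ a probability distribution over successors of $s$. Strategies are implemented by probabilistic transducers $(\mathsf M,\mathsf m_0,\pi_u,\pi_s)$ with countable memory $\mathsf M$, initial mode $\mathsf m_0$, randomized memory update $\pi_u:\mathsf M\times S\to\mathcal D(\mathsf M)$ and randomized successor choice $\pi_s:\mathsf M\times S_\Box\to\mathcal D(S)$ (choosing only successors of the current state); the induced strategy is $\sigma(s_0\cdots s_n)=\pi_s(s_n,\pi_u(s_0\cdots s_{n-1},\mathsf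 m_0))$ with $\pi_u$ extended naturally. A strategy is finite-memory (F) if some transducer with finite $\mathsf M$ induces it, deterministic (D) if $\pi_u,\pi_s$ can be taken Dirac; FR = finite-memory randomized, HD = history-dependent deterministic. $\mathcal P_{\mathcal M,s,\sigma}$ is the induced probability measure on plays from $s$. For a color function $\mathit{Col}:S\to\mathcal C$ with $\mathcal C\subseteq\mathbb N$ finite, $\mathrm{Parity}(\mathcal C)$ is the set of plays in which the largest color occurring infinitely often is even; thus $\mathrm{Parity}(\{0,1\})$ (co-Büchi) is the set of plays visiting color-1 states only finitely often. The value of $s$ is $\sup_\sigma\mathcal P_{\mathcal M,s,\sigma}(\varphi)$; $\sigma$ is $\epsilon$-optimal if it achieves at least value minus $\epsilon$, optimal if $\epsilon=0$, almost-surely winning if it achieves probability $1$. *)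

From HB Require Import structures.
From mathcomp Require Import all_boot all_order all_algebra.
From mathcomp Require Import classical_sets boolp cardinality reals ereal esum.
Set Implicit Arguments. Unset Strict Implicit. Unset Printing Implicit Defensive.
Import Order.TTheory GRing.Theory Num.Theory.
Local Open Scope classical_set_scope.
Local Open Scope ring_scope.

Section MDPDefs.
Variable R : realType.

Definition is_distr (T : countType) (d : T -> R) : Prop :=
  (forall x, 0 <= d x) /\ (\esum_(x in [set: T]) (d x)%:E = 1%E).

Record MDP := {
  St : countType;
  player : St -> bool;
  trans : St -> St -> Prop;
  trans_total : forall s, exists t, trans s t;
  prob : St -> St -> R;
  prob_distr : forall s, ~~ player s -> is_distr (prob s);
  prob_succ : forall s t, ~~ player s -> prob s t != 0 -> trans s t
}.

Definition infinitely_branching (M : MDP) : Prop :=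
  exists s : St M, ~ finite_set [set t | trans s t].

(* a strategy: partial play (s0 :: rest) ending in a player state |-> distribution *)
Definition strat (M : MDP) := seq (St M) -> St M -> R.

(* Probability of the cylinder of a finite path from initial state s
   (the empty path has the full cylinder, of probability 1). *)
Fixpoint cylp (M : MDP) (sigma : strat M) (pre : seq (St M)) (cur : St M)
  (rest : seq (St M)) : R :=
  match rest with
  | [::] => 1
  | t :: r =>
      (if player cur then sigma (rcons pre cur) t else prob cur t)
      * cylp sigma (rcons pre cur) t r
  end.

Definition pcyl (M : MDP) (sigma : strat M) (s : St M) (h : seq (St M)) : R :=
  match h with
  | [::] => 1
  | s0 :: rest => (s0 == s)%:R * cylp sigma [::] s0 rest
  end.

Definition play (M : MDP) := nat -> St M.

Definition cyl (M : MDP) (h : seq (St M)) : set (play M) :=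
  [set p | forall i, (i < size h)%N -> p i = nth (p i) h i].

(* P_{M,s,sigma}: the (Caratheodory outer) measure on plays generated by the
   cylinder probabilities; it coincides with the induced probability measure
   on all measurable sets of plays. *)
Definition Prob (M : MDP) (sigma : strat M) (s : St M) (A : set (play M))
  : \bar R :=
  ereal_inf [set \esum_(i in [set: nat]) (pcyl sigma s (c i))%:E
            | c in [set c : nat -> seq (St M) |
                    A `<=` \bigcup_(i in [set: nat]) cyl (c i)]].

Definition inf_often (M : MDP) (Col : St M -> nat) (p : play M) (c : nat) :=
  forall N, exists n, (N <= n)%N /\ Col (p n) = c.

Definition Parity (M : MDP) (Col : St M -> nat) : set (play M) :=
  [set p | exists c, ~~ odd c /\ inf_often Col p c /\
           forall c', (c < c')%N -> ~ inf_often Col p c'].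

Record FRtransducer (M : MDP) := {
  Mem : finType;
  m0 : Mem;
  upd : Mem -> St M -> Mem -> R;
  succ : Mem -> St M -> St M -> R;
  upd_distr : forall m s, (forall m', 0 <= upd m s m') /\ \sum_m' upd m s m' = 1;
  succ_distr : forall m s, player s -> is_distr (succ m s);
  succ_succ : forall m s t, player s -> succ m s t != 0 -> trans s t
}.

Definition memdist (M : MDP) (T : FRtransducer M) (w : seq (St M)) : Mem T -> R :=
  foldl (fun d s => fun m' => \sum_m d m * upd m s m')
        (fun m => (m == m0 T)%:R) w.

Definition FR_strategy (M : MDP) (T : FRtransducer M) : strat M :=
  fun h t => match h with
             | [::] => 0
             | s0 :: rest => \sum_m @memdist M T (belast s0 rest) m
                               * succ m (last s0 rest) t
             end.

Record HDtransducer (M : MDP) := {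
  DMem : countType;
  dm0 : DMem;
  dupd : DMem -> St M -> DMem;
  dsucc : DMem -> St M -> St M;
  dsucc_succ : forall m s, player s -> trans s (dsucc m s)
}.

Arguments dm0 {M} _ : rename.
Arguments dupd {M} _ _ _.
Arguments dsucc {M} _ _ _.

Definition HD_strategy (M : MDP) (T : HDtransducer M) : strat M :=
  fun h t => match h with
             | [::] => 0
             | s0 :: rest =>
                 (t == dsucc T (foldl (dupd T) (dm0 T) (belast s0 rest))
                             (last s0 rest))%:R
             end.

End MDPDefs.

From Pilot Require Import Defs.
From HB Require Import structures.
From mathcomp Require Import all_boot all_order all_algebra.
From mathcomp Require Import classical_sets boolp cardinality reals ereal esum.
From mathcomp Require Import fsbigop topology sequences normedtype.
From mathcomp Require Import ring lra.
Import Order.TTheory GRing.Theory Num.Theory.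
Local Open Scope classical_set_scope.
Local Open Scope ring_scope.
Set Implicit Arguments. Unset Strict Implicit. Unset Printing Implicit Defensive.

(* In the MDP below, each round the player picks a random state n >= 2, which
   sends the play to the colour-1 state 1 with probability 2^-(n-1).
   A finite-memory strategy has finitely many modes, each choosing a fixed
   distribution over random states, so every round avoids 1 with probability
   at most 1 - delta for a uniform delta > 0, and almost every play visits 1
   infinitely often.  The deterministic strategy picking state k + 2 in round k
   takes risks 2^-(k+1) of finite sum.  Since Prob is the outer measure
   generated by cylinders, the Borel-Cantelli bound is proved by following,
   from any cylinder cover of weight < 1, a branch that stays uncovered while
   the martingale "visits to 1 so far plus expected later visits" stays
   bounded. *)

Lemma rcons_neq_nil (T : eqType) (s : seq T) x : rcons s x != [::].
Proof. by case: s. Qed.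

Section prefix_rcons.
Variable T : eqType.
Implicit Types x h : seq T.

Lemma prefix_rconsE x h t : prefix x (rcons h t) = prefix x h || (x == rcons h t).
Proof.
elim: h x => [|y h IH] x; first by rewrite prefixs1 prefixs0.
case: x => [|a x]; first by rewrite !prefix0s.
by rewrite rcons_cons !prefix_cons IH eqseq_cons andb_orr.
Qed.

Lemma prefix_rcons_inj x h t0 t1 :
  prefix (rcons h t0) x -> prefix (rcons h t1) x -> t0 = t1.
Proof.
rewrite !prefixE !size_rcons => /eqP E0 /eqP E1.
by have := congr1 (last t0) (etrans (esym E0) E1); rewrite !last_rcons.
Qed.

End prefix_rcons.

Section bounded_count.
Variables (T : eqType) (a : pred T) (p : nat -> T).

Lemma count_mkseq_mono n j : (n <= j)%N -> (count a (mkseq p n) <= count a (mkseq p j))%N.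
Proof.
move=> nj; apply: leq_count_subseq.
by rewrite /mkseq -(subnKC nj) iotaD map_cat prefix_subseq.
Qed.

Lemma bounded_count_eventually K : (forall n, count a (mkseq p n) <= K)%N ->
  exists N, forall j, (N <= j)%N -> ~~ a (p j).
Proof.
move=> bounded; apply: contrapT => /forallNP recurrent.
have unbounded k : exists n, (k <= count a (mkseq p n))%N.
  elim: k => [|k [n kn]]; first by exists 0%N.
  have [j nj ajp] : exists2 j, (n <= j)%N & a (p j).
    apply: contrapT => none; apply: (recurrent n) => j nj; apply/negP => ajp.
    by apply: none; exists j.
  exists j.+1; rewrite mkseqS -cats1 count_cat /= ajp addn0 addn1 ltnS.
  exact: leq_trans kn (count_mkseq_mono nj).
have [n Kn] := unbounded K.+1.
by have := leq_trans Kn (bounded n); rewrite ltnn.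
Qed.

End bounded_count.

Section esum_facts.
Variables (R : realType) (T : choiceType).
Implicit Types a : T -> \bar R.

Lemma esum_ge_term a i : (0 <= a i)%E -> (a i <= \esum_(t in [set: T]) a t)%E.
Proof.
move=> ai; apply: esum_ge; exists [set i]; first by split => //; exact: finite_set1.
by rewrite fsbig_set1.
Qed.

Lemma esumZl_le a k : 0 <= k -> (forall t, 0 <= a t)%E ->
  (\esum_(t in [set: T]) (k%:E * a t) <= k%:E * \esum_(t in [set: T]) a t)%E.
Proof.
move=> k0 a0; apply: ge_ereal_sup => _ [X [finX _] <-].
rewrite -ge0_mule_fsumr //; apply: lee_wpmul2l; first by rewrite lee_fin.
by apply: ereal_sup_ubound; exists X.
Qed.

Lemma esum_single a i : (forall t, t != i -> a t = 0) -> (0 <= a i)%E ->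
  \esum_(t in [set: T]) a t = a i.
Proof.
move=> a0 ai; rewrite -(esum_set1 ai) [RHS]esum_mkcond; apply: eq_esum => t _.
case: ifPn => [/set_mem ->//|].
by rewrite notin_setE => /eqP /a0.
Qed.

End esum_facts.

Lemma distr_le1 (R : realType) (T : countType) (d : T -> R) :
  is_distr d -> forall x, d x <= 1.
Proof. by move=> [d0 d1] x; rewrite -lee_fin -d1 esum_ge_term ?lee_fin. Qed.

Lemma fin_lb_gt0 (R : realDomainType) (I : finType) (g : I -> R) : (forall i, 0 < g i) ->
  exists2 d, 0 < d & forall i, d <= g i.
Proof.
move=> g_gt0; exists (\big[Order.min/1]_i g i); last by move=> i; exact: bigmin_le.
by apply: (big_ind (fun x => 0 < x)) => // x y x0 y0; rewrite lt_min x0 y0.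
Qed.

Lemma le0_of_le_expr (R : realType) (x q : R) : 0 <= q -> q < 1 -> (forall n, x <= q ^+ n) -> x <= 0.
Proof.
move=> q0 q1 x_le.
have /cvg_expr q_cvg : `|q| < 1 by rewrite ger0_norm.
by apply: (cvgr_to_ge q_cvg); apply: nearW.
Qed.

Section cylinders.
Variables (R : realType) (M : MDP R).
Implicit Types (sigma : strat M) (s : St M) (h : seq (St M)).

Definition step_prob sigma h (t : St M) : R :=
  if h is x :: r then
    let l := last x r in if player l then sigma h t else prob l t
  else 0.

Lemma cylp_rcons sigma pre cur r t :
  cylp sigma pre cur (rcons r t) =
  cylp sigma pre cur r *
    (if player (last cur r) then sigma (pre ++ cur :: r) t else prob (last cur r) t).
Proof.
elim: r pre cur => [|y r IH] pre cur /=; first by rewrite mul1r mulr1 cats1.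
by rewrite IH mulrA cat_rcons.
Qed.

Lemma pcyl_rcons sigma s h t : h != [::] ->
  pcyl sigma s (rcons h t) = pcyl sigma s h * step_prob sigma h t.
Proof. by case: h => [//|x r] _; rewrite rcons_cons /= cylp_rcons mulrA. Qed.

Definition strat_bounded sigma :=
  forall x r t, player (last x r) -> 0 <= sigma (x :: r) t <= 1.

Lemma step_prob_bounded sigma : strat_bounded sigma ->
  forall h t, 0 <= step_prob sigma h t <= 1.
Proof.
move=> sb [|x r] t /=; first by rewrite lexx ler01.
case: ifPn => [/sb //|/prob_distr pd].
by rewrite (distr_le1 pd) andbT; case: pd.
Qed.

End cylinders.

Section bounded_strategy.
Variables (R : realType) (M : MDP R) (sigma : strat M) (s : St M).
Hypothesis sigma_bounded : strat_bounded sigma.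
Local Notation P := (pcyl sigma s).
Implicit Types (h : seq (St M)) (A : set (play M)).

Lemma pcyl_bounded h : 0 <= P h <= 1.
Proof.
elim/last_ind: h => [|h t IH]; first by rewrite lexx ler01.
have [->|hn] := eqVneq h [::]; first by rewrite /= mulr1; case: eqP; rewrite ?lexx ?ler01.
case/andP: IH => a0 a1; case/andP: (step_prob_bounded sigma_bounded h t) => b0 b1.
by rewrite pcyl_rcons // mulr_ge0 //= mulr_ile1.
Qed.

Lemma pcyl_ge0 h : 0 <= P h. Proof. by case/andP: (pcyl_bounded h). Qed.

Lemma pcyl_le1 h : P h <= 1. Proof. by case/andP: (pcyl_bounded h). Qed.

Lemma pcyl_prefix x h : prefix x h -> P h <= P x.
Proof.
move=> /prefixP [d ->]; elim/last_ind: d => [|d t IH]; first by rewrite cats0.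
rewrite -rcons_cat; apply: le_trans IH.
have [->|hn] := eqVneq (x ++ d) [::]; first exact: pcyl_le1.
case/andP: (step_prob_bounded sigma_bounded (x ++ d) t) => t0 t1.
by rewrite pcyl_rcons // ler_piMr ?pcyl_ge0.
Qed.

Lemma Prob_ge0 A : (0 <= Prob sigma s A)%E.
Proof.
apply: le_ereal_inf_tmp => _ [c _ <-].
by apply: esum_ge0 => i _; rewrite lee_fin pcyl_ge0.
Qed.

Lemma Prob_le_cover A (c : nat -> seq (St M)) :
  A `<=` \bigcup_(i in [set: nat]) cyl (c i) ->
  (Prob sigma s A <= \esum_(i in [set: nat]) (P (c i))%:E)%E.
Proof. by move=> Ac; apply: ereal_inf_lbound; exists c. Qed.

Lemma Prob_sub A B : A `<=` B -> (Prob sigma s A <= Prob sigma s B)%E.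
Proof.
move=> AB; apply: ereal_inf_le_tmp => _ [c Bc <-]; exists c => //.
exact: subset_trans Bc.
Qed.

Variable other : St M.
Hypothesis other_neq : other != s.

Lemma pcyl_other : P [:: other] = 0.
Proof. by rewrite /= (negbTE other_neq) mul0r. Qed.

Lemma Prob_le_cover2 A (cc : nat -> nat -> seq (St M)) :
  A `<=` \bigcup_(i in [set: nat]) \bigcup_(j in [set: nat]) cyl (cc i j) ->
  (Prob sigma s A <=
   \esum_(i in [set: nat]) \esum_(j in [set: nat]) (P (cc i j))%:E)%E.
Proof.
move=> Acc.
pose c n := if @pickle_inv (nat * nat)%type n is Some ij then cc ij.1 ij.2 else [:: other].
apply: le_trans (@Prob_le_cover _ c _) _.
  move=> p /Acc [i _ [j _ hj]]; exists (pickle (i, j)) => //.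
  by rewrite /c pickleK_inv.
have P0 h : (0 <= (P h)%:E)%E by rewrite lee_fin pcyl_ge0.
rewrite (esumID (range (@pickle (nat * nat)%type))); last by move=> *; exact: P0.
rewrite [X in (_ + X)%E]esum1 ?adde0; last first.
  move=> n [_ /= nr]; rewrite /c; case E: (pickle_inv n) => [x|]; last by rewrite pcyl_other.
  by exfalso; apply: nr; exists x => //; have := @pickle_invK (nat * nat)%type n; rewrite E.
rewrite setTI esum_image; last by move=> x y _ _; apply: (pcan_inj pickleK_inv).
rewrite esum_esum; last by move=> *; exact: P0.
have -> : [set: nat] `*`` (fun=> [set: nat]) = [set: nat * nat].
  by apply/seteqP; split => // -[i j].
by apply: le_esum => -[i j] _; rewrite /c pickleK_inv.
Qed.

Lemma Prob_cyl h : (Prob sigma s (cyl h) <= (P h)%:E)%E.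
Proof.
apply: le_trans (@Prob_le_cover _ (fun i => if i == 0%N then h else [:: other]) _) _.
  by move=> p hp; exists 0%N.
rewrite (@esum_single _ _ (fun i => (P (if i == 0%N then h else [:: other]))%:E) 0) //.
- by move=> i /negbTE ->; rewrite pcyl_other.
- by rewrite lee_fin pcyl_ge0.
Qed.

Lemma Prob_le1 A : (Prob sigma s A <= 1)%E.
Proof.
by apply: le_trans (Prob_sub (B := cyl [::]) _) (Prob_cyl [::]).
Qed.

Lemma Prob_null A h : A `<=` cyl h -> P h = 0 -> Prob sigma s A = 0%E.
Proof.
move=> Ah Ph0; apply/eqP; rewrite eq_le Prob_ge0 andbT.
by apply: le_trans (Prob_sub Ah) (le_trans (Prob_cyl h) _); rewrite Ph0.
Qed.

Lemma Prob_sub_bigcup A (B : nat -> set (play M)) :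
  A `<=` \bigcup_(i in [set: nat]) B i ->
  (Prob sigma s A <= \esum_(i in [set: nat]) Prob sigma s (B i))%E.
Proof.
move=> AB; apply/lee_addgt0Pr => e e0.
have cover i : exists c : nat -> seq (St M),
    B i `<=` \bigcup_(j in [set: nat]) cyl (c j) /\
    (\esum_(j in [set: nat]) (P (c j))%:E <= Prob sigma s (B i) + (e / (2 ^ i.+1)%:R)%:E)%E.
  have Bfin : Prob sigma s (B i) \is a fin_num.
    by rewrite ge0_fin_numE ?Prob_ge0 // (le_lt_trans (Prob_le1 _)) ?ltry.
  have ei : 0 < e / (2 ^ i.+1)%:R by rewrite divr_gt0 // ltr0n expn_gt0.
  by have [_ [c Bc <-] /ltW] := lb_ereal_inf_adherent ei Bfin; exists c.
have [cc Hcc] := choice cover.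
apply: le_trans (@Prob_le_cover2 _ cc _) _.
  by move=> p /AB [i _ /(proj1 (Hcc i)) Bp]; exists i.
apply: le_trans (le_esum (fun i _ => proj2 (Hcc i))) _.
rewrite -nneseries_esumT => [|i]; last by rewrite adde_ge0 ?Prob_ge0 // lee_fin divr_ge0 // ltW.
rewrite -nneseries_esumT => [|i]; last exact: Prob_ge0.
by apply: epsilon_trick => [i|]; [exact: Prob_ge0 | exact: ltW].
Qed.

End bounded_strategy.

Arguments Prob_sub {R M sigma s A B}.

Section plays.
Variables (R : realType) (M : MDP R).
Implicit Types (h : seq (St M)) (p : play M).

Lemma cyl_rcons h p : cyl h p -> cyl (rcons h (p (size h))) p.
Proof.
move=> ch i; rewrite size_rcons ltnS leq_eqVlt => /orP [/eqP ->|ih].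
  by rewrite nth_rcons ltnn eqxx.
by rewrite nth_rcons ih; apply: ch.
Qed.

Lemma cyl_mkseq h p : cyl h p -> h = mkseq p (size h).
Proof.
move=> ch; apply: (@eq_from_nth _ (p 0%N)); first by rewrite size_mkseq.
by move=> j jh; rewrite nth_mkseq // (ch j jh); apply: set_nth_default.
Qed.

Lemma play_of_invariant (I : seq (St M) -> Prop) x :
  I [:: x] -> (forall h, h != [::] -> I h -> exists t, I (rcons h t)) ->
  exists p : play M, forall n, I (mkseq p n.+1).
Proof.
move=> I0 Istep.
have /choice [g Hg] : forall h, exists t, h != [::] -> I h -> I (rcons h t).
  move=> h; have [[hn Ih]|nI] := pselect (h != [::] /\ I h); last by exists x => hn Ih; case: nI.
  by have [t It] := Istep h hn Ih; exists t.
pose H n := iter n (fun h => rcons h (g h)) [:: x].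
have HI n : I (H n).
  elim: n => [//|n IH] /=; apply: Hg IH.
  by case: n => [//|n] /=; rewrite rcons_neq_nil.
pose p n := last x (H n).
have Hp n : H n = mkseq p n.+1 by elim: n => [//|n IH]; rewrite mkseqS -IH /p /= last_rcons.
by exists p => n; rewrite -Hp.
Qed.

End plays.

Section transducers.
Variables (R : realType) (M : MDP R).

Lemma memdist_distr (T : FRtransducer M) w :
  (forall m, 0 <= memdist (T := T) w m) /\ \sum_m memdist (T := T) w m = 1.
Proof.
rewrite /memdist; set d0 := (fun m => (m == m0 T)%:R).
have : (forall m, 0 <= d0 m) /\ \sum_m d0 m = 1.
  split => [m|]; first by rewrite /d0; case: eqP.
  by rewrite (bigD1 (m0 T)) //= /d0 eqxx big1 ?addr0 // => m /negbTE ->.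
elim: w d0 => [//|x w IH] d [d_ge0 d_sum] /=; apply: IH; split => [m'|].
  by apply: sumr_ge0 => m _; rewrite mulr_ge0 //; case: (upd_distr m x).
rewrite exchange_big /= -[RHS]d_sum; apply: eq_bigr => m _.
by rewrite -mulr_sumr; case: (upd_distr m x) => _ ->; rewrite mulr1.
Qed.

Lemma FR_strategy_bounded (T : FRtransducer M) : strat_bounded (FR_strategy T).
Proof.
move=> x r t pl; have [mu0 mu1] := memdist_distr T (belast x r).
have succ_bounded (m : Defs.Mem T) : 0 <= succ m (last x r) t <= 1.
  by have [s0 _] := succ_distr m pl; rewrite s0 (distr_le1 (succ_distr m pl)).
rewrite sumr_ge0 => [|m _] /=; last by case/andP: (succ_bounded m) => *; rewrite mulr_ge0.
rewrite -[X in _ <= X]mu1; apply: ler_sum => m _.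
by case/andP: (succ_bounded m) => _ s1; rewrite ler_piMr.
Qed.

Lemma HD_strategy_bounded (T : HDtransducer M) : strat_bounded (HD_strategy T).
Proof. by move=> x r t _ /=; case: eqP; rewrite ?lexx ?ler01. Qed.

End transducers.

Section uncovered_play.
Variables (R : realType) (M : MDP R) (sigma : strat M) (s : St M).
Hypothesis sigma_bounded : strat_bounded sigma.
Local Notation P := (pcyl sigma s).
Implicit Types (h x : seq (St M)).

(* The probability of the intersection of the cylinders of h and x. *)
Definition cover_mass h x : R :=
  if prefix x h then P h else if prefix h x then P x else 0.

Lemma cover_mass_ge0 h x : 0 <= cover_mass h x.
Proof. by rewrite /cover_mass; case: ifP => _; last case: ifP => _; rewrite ?pcyl_ge0. Qed.

Lemma cover_mass_le h x : cover_mass h x <= P x.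
Proof.
rewrite /cover_mass; case: ifP => [/(pcyl_prefix s sigma_bounded) //|_].
by case: ifP => _; rewrite ?pcyl_ge0.
Qed.

Lemma cover_mass_children h (ts : seq (St M)) x : h != [::] -> uniq ts ->
  \sum_(t <- ts) step_prob sigma h t = 1 ->
  \sum_(t <- ts) cover_mass (rcons h t) x <= cover_mass h x.
Proof.
move=> hn ts_uniq ts_total; rewrite {2}/cover_mass; case: ifPn => [xh|xNh].
  under eq_bigr => t _ do
    rewrite /cover_mass prefix_rconsE xh pcyl_rcons //.
  by rewrite -mulr_sumr ts_total mulr1.
have childE t : cover_mass (rcons h t) x = if prefix (rcons h t) x then P x else 0.
  rewrite /cover_mass prefix_rconsE (negbTE xNh) /=.
  by case: eqP => [->|//]; rewrite prefix_refl.
under eq_bigr => t _ do rewrite childE.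
have [[t0 t0ts ht0]|none] := pselect (exists2 t0, t0 \in ts & prefix (rcons h t0) x).
  rewrite (bigD1_seq t0) //= ht0 big1 ?addr0 => [|t /negbTE tt0].
    by rewrite (prefix_trans (prefix_rcons h t0) ht0).
  by case: ifP => // /(prefix_rcons_inj ht0) t0t; rewrite t0t eqxx in tt0.
rewrite big1_seq => [|t /andP [_ tts]]; first by case: ifP; rewrite ?pcyl_ge0.
by case: ifP => // htx; case: none; exists t.
Qed.

Variables (succs : seq (St M) -> seq (St M)) (Z : seq (St M) -> R).
Hypothesis succs_uniq : forall h, uniq (succs h).
Hypothesis succs_total : forall h, h != [::] ->
  \sum_(t <- succs h) step_prob sigma h t = 1.
Hypothesis Z_ge0 : forall h, 0 <= Z h.
Hypothesis Z_supermartingale : forall h, h != [::] ->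
  \sum_(t <- succs h) step_prob sigma h t * Z (rcons h t) <= Z h.

Variables (c : nat -> seq (St M)) (eps : R).
Hypothesis eps_gt0 : 0 < eps.

Definition cover_weight h : \bar R := \esum_(i in [set: nat]) (cover_mass h (c i))%:E.

Definition uncovered h := (cover_weight h + (eps * P h * Z h)%:E < (P h)%:E)%E.

Lemma cover_weight_ge0 h : (0 <= cover_weight h)%E.
Proof. by apply: esum_ge0 => i _; rewrite lee_fin cover_mass_ge0. Qed.

Lemma uncovered_step h : h != [::] -> uncovered h -> exists t, uncovered (rcons h t).
Proof.
move=> hn; apply: contraPP => /forallNP covered; apply/negP; rewrite -leNgt.
have child_le t : ((P (rcons h t))%:E <=
    cover_weight (rcons h t) + (eps * P (rcons h t) * Z (rcons h t))%:E)%E.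
  by rewrite leNgt; apply/negP/covered.
have Ph : (P h)%:E = (\sum_(t <- succs h) (P (rcons h t))%:E)%E.
  by rewrite sumEFin; under eq_bigr => t _ do rewrite pcyl_rcons //; rewrite -mulr_sumr succs_total ?mulr1.
rewrite Ph; have := @lee_sum _ _ _ _ (succs h) xpredT (fun t _ => child_le t).
move=> /le_trans; apply; rewrite big_split /=.
apply: leeD.
  rewrite -esum_sum => [|i t _ _]; last by rewrite lee_fin cover_mass_ge0.
  apply: le_esum => i _; rewrite sumEFin lee_fin.
  exact: cover_mass_children hn (succs_uniq h) (succs_total hn).
rewrite sumEFin lee_fin.
under eq_bigr => t _ do rewrite pcyl_rcons // mulrA -mulrA.
by rewrite -mulr_sumr ler_wpM2l ?(Z_supermartingale hn) // mulr_ge0 ?pcyl_ge0 ?ltW.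
Qed.

Lemma uncovered_no_prefix h i : uncovered h -> ~~ prefix (c i) h.
Proof.
move=> Uh; apply/negP => ch; move: Uh; apply/negP; rewrite -leNgt.
apply: (@le_trans _ _ (cover_weight h)); last first.
  by apply: leeDl; rewrite lee_fin !mulr_ge0 ?pcyl_ge0 ?Z_ge0 ?ltW.
have <- : cover_mass h (c i) = P h by rewrite /cover_mass ch.
by apply: (esum_ge_term (a := fun j => (cover_mass h (c j))%:E)); rewrite lee_fin cover_mass_ge0.
Qed.

Lemma uncovered_Z_lt h : uncovered h -> eps * Z h < 1.
Proof.
move=> Uh.
have lt : eps * P h * Z h < P h.
  by rewrite -lte_fin; apply: le_lt_trans Uh; rewrite leeDr ?cover_weight_ge0.
have Ph : 0 < P h.
  by apply: le_lt_trans lt; rewrite !mulr_ge0 ?pcyl_ge0 ?Z_ge0 ?ltW.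
by rewrite -(ltr_pM2r Ph) mul1r mulrAC.
Qed.

Lemma uncovered_play :
  (\esum_(i in [set: nat]) (P (c i))%:E + (eps * Z [:: s])%:E < 1)%E ->
  exists p : play M, (forall i, ~ cyl (c i) p) /\ forall n, eps * Z (mkseq p n.+1) < 1.
Proof.
move=> small.
have root : uncovered [:: s].
  rewrite /uncovered /= eqxx !mulr1; apply: le_lt_trans small; rewrite leeD2r //.
  by apply: le_esum => i _; rewrite lee_fin cover_mass_le.
have [p Up] := play_of_invariant root uncovered_step.
exists p; split => [i ci|n]; last exact: uncovered_Z_lt.
have /negP := uncovered_no_prefix i (Up (size (c i))); apply.
by rewrite mkseqS -(cyl_mkseq ci) prefix_rcons.
Qed.

End uncovered_play.

Section cobuchi_mdp.
Variable R : realType.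

Definition risk (n : nat) : R := 2^-1 ^+ n.-1.

Definition cb_trans (n t : nat) : bool := if (n <= 1)%N then (2 <= t)%N else (t <= 1)%N.

Definition cb_prob (n t : nat) : R :=
  if (n <= 1)%N then 0 else if t == 0%N then 1 - risk n else if t == 1%N then risk n else 0.

Lemma risk_gt0 n : 0 < risk n.
Proof. by rewrite exprn_gt0 // invr_gt0. Qed.

Lemma risk_le1 n : risk n <= 1.
Proof. by rewrite exprn_ile1 // ?invr_ge0 // invf_le1 // ler1n. Qed.

Lemma cb_trans_total n : exists t, cb_trans n t.
Proof. by rewrite /cb_trans; case: (n <= 1)%N; [exists 2%N | exists 0%N]. Qed.

Lemma cb_prob_distr n : ~~ (n <= 1)%N -> is_distr (cb_prob n).
Proof.
rewrite /cb_prob => /negbTE ->.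
have risk_ge0 := ltW (risk_gt0 n); have safe_ge0 : 0 <= 1 - risk n by rewrite subr_ge0 risk_le1.
split=> [[|[|t]] //|].
rewrite (eq_esum (b := fun t => (if t == 0%N then 1 - risk n else 0)%:E +
                                (if t == 1%N then risk n else 0)%:E)%E); last first.
  by move=> [|[|t]] _ /=; rewrite ?add0e ?adde0.
rewrite esumD => [|t _|t _]; last 2 first.
- by case: eqP; rewrite lee_fin.
- by case: eqP; rewrite lee_fin.
rewrite (esum_single (i := 0%N)) ?lee_fin ?eqxx // => [|t /negbTE ->//].
rewrite (esum_single (i := 1%N)) ?lee_fin ?eqxx // => [|t /negbTE ->//].
by rewrite -EFinD subrK.
Qed.

Lemma cb_prob_bounded n t : 0 <= cb_prob n t <= 1.
Proof.
have [r0 r1] := (ltW (risk_gt0 n), risk_le1 n); rewrite /cb_prob.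
case: ifP => _; first by rewrite lexx ler01.
case: ifP => _; first by rewrite subr_ge0 r1 gerBl.
by case: ifP => _; rewrite ?r0 ?r1 ?lexx ?ler01.
Qed.

Lemma cb_prob_succ n t : ~~ (n <= 1)%N -> cb_prob n t != 0 -> cb_trans n t.
Proof. by rewrite /cb_prob /cb_trans => /negbTE ->; case: t => [|[|t]]; rewrite ?eqxx. Qed.

Definition cb_mdp : MDP R :=
  Build_MDP cb_trans_total cb_prob_distr cb_prob_succ.

Lemma cb_step_prob (sigma : strat cb_mdp) (h : seq nat) t : h != [::] ->
  step_prob sigma h t =
  if (last 0%N h <= 1)%N then sigma h t else cb_prob (last 0%N h) t.
Proof. by case: h. Qed.

Lemma cb_infinitely_branching : infinitely_branching cb_mdp.
Proof.
exists 0%N => /=; rewrite /cb_trans /=.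
have -> : [set t : nat | (2 <= t)%N] = [set: nat] `\` `I_2.
  apply/seteqP; split => t /=; last by move=> [_ /negP]; rewrite -leqNgt.
  by move=> t2; split => //; apply/negP; rewrite -leqNgt.
by apply: infinite_setD; [exact: infinite_nat | exact: finite_II].
Qed.

Definition Col (n : St cb_mdp) : nat := n == 1%N.

Lemma Col_le1 n : (Col n <= 1)%N.
Proof. by rewrite /Col; case: eqP. Qed.

Lemma Parity_ColE (p : play cb_mdp) :
  Parity Col p <-> exists N, forall j, (N <= j)%N -> p j != 1%N.
Proof.
split=> [[c [c_even [c_io c_max]]]|[N Np]].
  have c0 : c = 0%N.
    by have [n [_ Cn]] := c_io 0%N; move: c_even; rewrite -Cn /Col; case: eqP.
  subst c; have not_io := c_max 1%N isT.
  apply: contrapT => recurrent; apply: not_io => N; apply: contrapT => none.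
  apply: recurrent; exists N => j Nj; apply/eqP => pj1; apply: none.
  by exists j; rewrite /Col pj1.
exists 0%N; split => //; split => [M|c c_gt0 c_io].
  exists (maxn N M); split; first exact: leq_maxr.
  by rewrite /Col (negbTE (Np _ (leq_maxl _ _))).
have [j [Nj Cj]] := c_io N.
by move: c_gt0; rewrite -Cj /Col (negbTE (Np j Nj)).
Qed.

End cobuchi_mdp.

Arguments risk {R} n.
Arguments cb_prob {R} n t.
Arguments Col {R} n.

Section HD_strategy_wins.
Variable R : realType.
Local Notation M := (cb_mdp R).
Implicit Types h : seq nat.

Definition count_random h : nat := count (fun n => 1 < n)%N h.

Lemma counter_move_trans (m : nat) (n : St M) : player n -> trans n m.+2.
Proof. by rewrite /= /cb_trans => ->. Qed.

Definition HD_counter : HDtransducer M :=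
  @Build_HDtransducer R M nat 0%N (fun m n => (m + (1 < n))%N) (fun m _ => m.+2)
    counter_move_trans.

Local Notation sigmaH := (HD_strategy HD_counter).
Local Notation P := (pcyl sigmaH 0%N).

Lemma step_prob_HD h t : h != [::] ->
  step_prob sigmaH h t =
  if (last 0%N h <= 1)%N then (t == (count_random h).+2)%:R else cb_prob (last 0%N h) t.
Proof.
case: h => [//|x r] _ /=; case: ifP => // last_player; congr (_ == _.+2)%:R.
have counter w a : foldl (fun m n => (m + (1 < n))%N) a w = (a + count_random w)%N.
  by elim: w a => [|y w IH] a /=; rewrite ?addn0 // IH addnA.
rewrite counter add0n -[RHS]/(count_random (x :: r)) lastI /count_random.
by rewrite -cats1 count_cat /= ltnNge last_player !addn0.
Qed.

Definition HD_succs h : seq nat :=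
  if (last 0%N h <= 1)%N then [:: (count_random h).+2] else [:: 0%N; 1%N].

(* The number of visits to 1 in h plus the expected number of later visits. *)
Definition visits_potential h : R :=
  (count_mem 1%N h)%:R + 2^-1 ^+ count_random h +
  (if (1 < last 0%N h)%N then risk (last 0%N h) else 0).

Lemma visits_le_potential h : (count_mem 1%N h)%:R <= visits_potential h.
Proof.
rewrite /visits_potential -addrA lerDl addr_ge0 ?exprn_ge0 ?invr_ge0 //.
by case: ifP => _ //; rewrite ltW ?risk_gt0.
Qed.

Lemma visits_potential_ge0 h : 0 <= visits_potential h.
Proof. exact: le_trans (visits_le_potential h). Qed.

Lemma HD_succs_uniq h : uniq (HD_succs h).
Proof. by rewrite /HD_succs; case: ifP. Qed.

Lemma HD_succs_total h : h != [::] ->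
  \sum_(t <- HD_succs h) step_prob sigmaH h t = 1.
Proof.
move=> hn; rewrite /HD_succs; case: ifPn => last_h.
  by rewrite big_seq1 step_prob_HD // last_h eqxx.
rewrite !big_cons big_nil addr0 !step_prob_HD // (negbTE last_h) /cb_prob.
by rewrite (negbTE last_h) /= subrK.
Qed.

Lemma visits_potential_martingale h : h != [::] ->
  \sum_(t <- HD_succs h) step_prob sigmaH h t * visits_potential (rcons h t) =
  visits_potential h.
Proof.
move=> hn; rewrite /HD_succs /visits_potential /count_random.
case: ifPn => last_h.
  rewrite big_seq1 step_prob_HD // last_h eqxx mul1r last_rcons -cats1 !count_cat /=.
  rewrite ltnNge last_h /= !addn0 addr0 addn1 /risk /= exprS.
  by set x := 2^-1 ^+ _; field.
rewrite !big_cons big_nil addr0 !step_prob_HD // (negbTE last_h) /cb_prob (negbTE last_h).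
rewrite !last_rcons -!cats1 !count_cat /=; rewrite -ltnNge in last_h; rewrite last_h /=.
by rewrite !addn0 !addr0 natrD; ring.
Qed.

Lemma HD_cover_ge1 (c : nat -> seq nat) :
  Parity Col `<=` \bigcup_(i in [set: nat]) cyl (M := M) (c i) ->
  (1 <= \esum_(i in [set: nat]) (P (c i))%:E)%E.
Proof.
move=> cover; rewrite leNgt; apply/negP => small.
set S := (\esum_(i in [set: nat]) _)%E in small.
have S_fin : S \is a fin_num.
  rewrite ge0_fin_numE ?(lt_trans small) ?ltry //.
  by apply: esum_ge0 => i _; rewrite lee_fin (pcyl_ge0 _ (HD_strategy_bounded _)).
set eps := (1 - fine S) / 2.
have small_S : fine S < 1 by rewrite -lte_fin fineK.
have eps_gt0 : 0 < eps by rewrite divr_gt0 // subr_gt0.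
have root_small : (S + (eps * visits_potential [:: 0%N])%:E < 1)%E.
  rewrite /visits_potential /= expr0 add0r addr0 mulr1 -(fineK S_fin) -EFinD lte_fin.
  by rewrite /eps; lra.
have supermartingale h : h != [::] -> \sum_(t <- HD_succs h)
    step_prob sigmaH h t * visits_potential (rcons h t) <= visits_potential h.
  by move=> hn; rewrite visits_potential_martingale.
have [p [p_uncovered p_small]] := uncovered_play (HD_strategy_bounded HD_counter)
  HD_succs_uniq HD_succs_total visits_potential_ge0 supermartingale eps_gt0 root_small.
have [N p_safe] : exists N, forall j, (N <= j)%N -> p j != 1%N.
  apply: (@bounded_count_eventually _ (pred1 1%N) p (Num.truncn eps^-1)) => n.
  rewrite truncn_ge_nat ?invr_ge0 ?(ltW eps_gt0) // -(ler_pM2l eps_gt0) divff ?gt_eqF //.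
  apply/ltW/(le_lt_trans _ (p_small n)); apply: ler_wpM2l; first exact: ltW.
  by apply: le_trans _ (visits_le_potential _); rewrite ler_nat count_mkseq_mono.
have [i _ ci] := cover p (proj2 (Parity_ColE p) (ex_intro _ N p_safe)).
exact: p_uncovered ci.
Qed.

Lemma HD_prob : Prob sigmaH 0%N (Parity Col) = 1%E.
Proof.
apply/eqP; rewrite eq_le (@Prob_le1 _ M _ _ (HD_strategy_bounded _) 1%N) //=.
by apply: le_ereal_inf_tmp => _ [c cover <-]; apply: HD_cover_ge1.
Qed.

End HD_strategy_wins.

Section risky_strategies_lose.
Variables (R : realType) (sigma : strat (cb_mdp R)) (delta : R).
Hypothesis sigma_bounded : strat_bounded sigma.
Hypothesis sigma_moves_random : forall h t, h != [::] -> (last 0%N h <= 1)%N ->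
  (t <= 1)%N -> sigma h t = 0.
Hypothesis delta_gt0 : 0 < delta.
Hypothesis escape_le : forall h, h != [::] -> (last 0%N h <= 1)%N ->
  (\esum_(t in [set: nat]) (sigma h t * cb_prob t 0)%:E <= (1 - delta)%:E)%E.
Local Notation P := (pcyl sigma 0%N).
Local Notation Pr := (Prob sigma 0%N).
Local Notation M := (cb_mdp R).
Implicit Types h : seq (St M).

Lemma delta_le1 : delta <= 1.
Proof.
rewrite -subr_ge0 -lee_fin; apply: le_trans (escape_le (h := [:: 0%N]) isT isT).
apply: esum_ge0 => t _; case/andP: (@sigma_bounded 0%N [::] t isT) => s0 _.
by case/andP: (cb_prob_bounded R t 0) => c0 _; rewrite lee_fin mulr_ge0.
Qed.

Lemma Pr_null (A : set (play M)) h : A `<=` cyl h -> P h = 0 -> Pr A = 0%E.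
Proof. exact: (@Prob_null _ _ _ _ sigma_bounded 1%N). Qed.

Lemma sigma_ge0 h t : h != [::] -> (last 0%N h <= 1)%N -> 0 <= sigma h t.
Proof.
by move=> hn hl; have := step_prob_bounded sigma_bounded h t; rewrite cb_step_prob // hl => /andP [].
Qed.

Section avoiding_1_after_N.
Variable N : nat.

Definition avoid1 h : set (play M) :=
  cyl h `&` [set p | forall j, (N <= j)%N -> p j != 1%N].

Lemma avoid1_rcons h : avoid1 h `<=` \bigcup_(t in [set: nat]) avoid1 (rcons h t).
Proof. by move=> p [hp pN]; exists (p (size h)) => //; split => //; apply: cyl_rcons. Qed.

Lemma avoid1_rcons1 h : (N <= size h)%N -> avoid1 (rcons h 1%N) `<=` set0.
Proof.
move=> Nh p [hp /(_ _ Nh)]; have := hp (size h).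
by rewrite size_rcons ltnSn nth_rcons ltnn eqxx => /(_ isT) ->.
Qed.

(* Bounds the probability of following h and then avoiding 1 through the
   pending random move and n further rounds. *)
Definition escape_bound n h : R :=
  P h * (if (last 0%N h <= 1)%N then 1 else cb_prob (last 0%N h) 0) * (1 - delta) ^+ n.

Lemma Prob_avoid1_random h : h != [::] -> (1 < last 0%N h)%N -> (N <= size h)%N ->
  (Pr (avoid1 h) <= Pr (avoid1 (rcons h 0%N)))%E.
Proof.
move=> hn hl Nh; have hNl : ~~ (last 0%N h <= 1)%N by rewrite -ltnNge.
apply: le_trans (Prob_sub_bigcup sigma_bounded (isT : 1%N != 0%N) (avoid1_rcons (h := h))) _.
rewrite (esum_single (i := 0%N)) ?Prob_ge0 // => -[//|[_|t _]].
  apply: (@Pr_null _ [:: 1%N]) => [p /(avoid1_rcons1 Nh) //|].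
  by rewrite /= mul0r.
apply: (@Pr_null _ (rcons h t.+2)); first by move=> p [].
by rewrite pcyl_rcons // cb_step_prob // (negbTE hNl) /cb_prob (negbTE hNl) mulr0.
Qed.

Lemma Prob_avoid1_player n h : h != [::] -> (last 0%N h <= 1)%N -> (N <= size h)%N ->
  (forall t, (1 < t)%N -> (Pr (avoid1 (rcons h t)) <= (escape_bound n (rcons h t))%:E)%E) ->
  (Pr (avoid1 h) <= (escape_bound n.+1 h)%:E)%E.
Proof.
move=> hn hl Nh children; set K := P h * (1 - delta) ^+ n.
have K_ge0 : 0 <= K by rewrite mulr_ge0 ?(pcyl_ge0 _ sigma_bounded) ?exprn_ge0 ?subr_ge0 ?delta_le1.
have weight_ge0 t : 0 <= sigma h t * cb_prob t 0.
  by rewrite mulr_ge0 ?sigma_ge0 //; case/andP: (cb_prob_bounded R t 0).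
apply: le_trans (Prob_sub_bigcup sigma_bounded (isT : 1%N != 0%N) (avoid1_rcons (h := h))) _.
apply: le_trans (le_esum (b := fun t => (K%:E * (sigma h t * cb_prob t 0)%:E)%E) _) _.
  move=> t _; have [t1|t2] := leqP t 1.
    rewrite (@Pr_null _ (rcons h t)) => [|p []//|]; first by rewrite -EFinM lee_fin mulr_ge0.
    by rewrite pcyl_rcons // cb_step_prob // hl sigma_moves_random ?mulr0.
  apply: le_trans (children t t2) _; rewrite -EFinM lee_fin le_eqVlt; apply/orP; left.
  rewrite /escape_bound pcyl_rcons // cb_step_prob // hl last_rcons leqNgt t2 /= /K.
  by apply/eqP; ring.
apply: le_trans (esumZl_le K_ge0 _) _ => [t|]; first by rewrite lee_fin.
have -> : escape_bound n.+1 h = K * (1 - delta) by rewrite /escape_bound hl mulr1 exprSr mulrA.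
by rewrite [X in (_ <= X)%E]EFinM; apply: lee_wpmul2l; [rewrite lee_fin | exact: escape_le].
Qed.

Lemma escape_bound_random n h : h != [::] -> (1 < last 0%N h)%N ->
  escape_bound n (rcons h 0%N) = escape_bound n h.
Proof.
move=> hn hl; have hNl : (last 0%N h <= 1)%N = false by rewrite leqNgt hl.
by rewrite /escape_bound pcyl_rcons // cb_step_prob // hNl last_rcons /= mulr1.
Qed.

Lemma Prob_avoid1_le n h : h != [::] -> (N <= size h)%N ->
  (Pr (avoid1 h) <= (escape_bound n h)%:E)%E.
Proof.
have of_player k : (forall g, g != [::] -> (last 0%N g <= 1)%N -> (N <= size g)%N ->
      (Pr (avoid1 g) <= (escape_bound k g)%:E)%E) ->
    forall g, g != [::] -> (N <= size g)%N -> (Pr (avoid1 g) <= (escape_bound k g)%:E)%E.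
  move=> player_le g gn Ng; have [gl|gl] := leqP (last 0%N g) 1; first exact: player_le.
  apply: le_trans (Prob_avoid1_random gn gl Ng) _; rewrite -escape_bound_random //.
  by apply: player_le; rewrite ?rcons_neq_nil ?last_rcons ?size_rcons ?(leq_trans Ng).
elim: n h => [|n IH]; apply: of_player => h hn hl Nh.
  rewrite /escape_bound hl expr0 !mulr1.
  by apply: le_trans (Prob_sub _) (Prob_cyl sigma_bounded (isT : 1%N != 0%N) h) => p [].
apply: Prob_avoid1_player => // t _.
by apply: IH; rewrite ?rcons_neq_nil ?size_rcons ?(leq_trans Nh).
Qed.

Lemma escape_bound_le n h : escape_bound n h <= (1 - delta) ^+ n.
Proof.
rewrite /escape_bound -[X in _ <= X]mul1r ler_wpM2r ?exprn_ge0 ?subr_ge0 ?delta_le1 //.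
rewrite mulr_ile1 ?(pcyl_ge0 _ sigma_bounded) ?(pcyl_le1 _ sigma_bounded) //;
  by case: ifP => _ //; case/andP: (cb_prob_bounded R (last 0%N h) 0).
Qed.

Lemma Prob_avoid1_null h : h != [::] -> (N <= size h)%N -> Pr (avoid1 h) = 0%E.
Proof.
move=> hn Nh; have Pr_fin : Pr (avoid1 h) \is a fin_num.
  by rewrite ge0_fin_numE ?Prob_ge0 // (le_lt_trans (Prob_le1 sigma_bounded (isT : 1%N != 0%N) _)) ?ltry.
apply/eqP; rewrite eq_le Prob_ge0 // andbT -(fineK Pr_fin) lee_fin.
apply: (@le0_of_le_expr _ _ (1 - delta)) => [||n]; rewrite ?subr_ge0 ?delta_le1 //.
  by rewrite ltrBlDr ltrDl.
rewrite -lee_fin fineK //; apply: le_trans (Prob_avoid1_le n hn Nh) _.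
by rewrite lee_fin escape_bound_le.
Qed.

Lemma Prob_avoid1_eq0 h : Pr (avoid1 h) = 0%E.
Proof.
have [k hk] := ubnP (N.+1 - size h); elim: k h hk => [//|k IH] h hk.
have [Nh|hN] := ltnP N (size h).
  by apply: Prob_avoid1_null; rewrite 1?ltnW // -size_eq0 -lt0n (leq_ltn_trans _ Nh).
apply/eqP; rewrite eq_le Prob_ge0 // andbT.
apply: le_trans (Prob_sub_bigcup sigma_bounded (isT : 1%N != 0%N) (avoid1_rcons (h := h))) _.
rewrite esum1 // => t _; apply: IH.
by rewrite size_rcons subSS; rewrite subSn // in hk.
Qed.

End avoiding_1_after_N.

Lemma risky_Parity_null : Pr (Parity Col) = 0%E.
Proof.
apply/eqP; rewrite eq_le Prob_ge0 // andbT.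
have cover : Parity Col `<=` \bigcup_(N in [set: nat]) avoid1 N [::].
  by move=> p /Parity_ColE [N Np]; exists N => //; split.
apply: le_trans (Prob_sub_bigcup sigma_bounded (isT : 1%N != 0%N) cover) _.
by rewrite esum1 // => N _; rewrite Prob_avoid1_eq0.
Qed.

End risky_strategies_lose.

Section FR_strategies_are_risky.
Variables (R : realType) (T : FRtransducer (cb_mdp R)).
Local Notation M := (cb_mdp R).
Local Notation sigma := (FR_strategy T).
Implicit Types (h : seq (St M)) (m : Defs.Mem T).

Lemma succ_player_target m n t : (n <= 1)%N -> (t <= 1)%N -> succ m n t = 0.
Proof.
move=> n1 t1; apply/eqP; apply: contraTT t1 => /(@succ_succ _ _ T m n t n1).
by rewrite /= /cb_trans n1 -ltnNge.
Qed.

Lemma FR_moves_random h t : h != [::] -> (last 0%N h <= 1)%N -> (t <= 1)%N ->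
  sigma h t = 0.
Proof.
case: h => [//|x r] _ hl t1; apply: big1 => m _.
by rewrite succ_player_target ?mulr0.
Qed.

Definition succ_escape m n : \bar R :=
  \esum_(t in [set: nat]) (succ m n t * cb_prob t 0)%:E.

Lemma succ_escape_lt1 m n : (n <= 1)%N -> (succ_escape m n < 1)%E.
Proof.
move=> n1; have [d_ge0 d_sum] := succ_distr m n1; set d := succ m n in d_ge0 d_sum *.
have e_bounded t := cb_prob_bounded R t 0.
set B := (\esum_(t in [set: nat]) (d t * (1 - cb_prob t 0))%:E)%E.
have AB : (succ_escape m n + B = 1)%E.
  rewrite -esumD => [|t _|t _]; last 2 first.
  - by case/andP: (e_bounded t) => e0 _; rewrite lee_fin mulr_ge0.
  - by case/andP: (e_bounded t) => _ e1; rewrite lee_fin mulr_ge0 ?subr_ge0.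
  by rewrite -d_sum; apply: eq_esum => t _; rewrite -EFinD -mulrDr subrKC mulr1.
have [t0 dt0] : exists t0, d t0 != 0.
  apply: contrapT => /forallNP d0; move: d_sum; rewrite esum1 => [/esym/eqP|t _].
    by rewrite onee_eq0.
  by have /negP := d0 t; rewrite negbK => /eqP ->.
have t0_random : (1 < t0)%N.
  by rewrite ltnNge; apply: contraNN dt0 => t01; rewrite /d succ_player_target.
have B_gt0 : (0 < B)%E.
  have B_ge := esum_ge_term (a := fun t => (d t * (1 - cb_prob t 0))%:E) (i := t0).
  apply: lt_le_trans (B_ge _); last first.
    by case/andP: (e_bounded t0) => _ e1; rewrite lee_fin mulr_ge0 ?subr_ge0.
  rewrite lte_fin mulr_gt0 ?lt_def ?dt0 ?d_ge0 //.
  by rewrite /cb_prob leqNgt t0_random /= subKr -lt_def risk_gt0.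
have A_fin : succ_escape m n \is a fin_num.
  rewrite ge0_fin_numE ?(le_lt_trans _ (ltry 1)) //; last first.
    by apply: esum_ge0 => t _; case/andP: (e_bounded t) => e0 _; rewrite lee_fin mulr_ge0.
  by rewrite -AB leeDl // ltW.
by rewrite -AB -[X in (X < _)%E]adde0 lteD2lE.
Qed.

Lemma succ_escape_fin m n : (n <= 1)%N -> succ_escape m n \is a fin_num.
Proof.
move=> n1; rewrite ge0_fin_numE ?(lt_trans (succ_escape_lt1 m n1)) ?ltry //.
apply: esum_ge0 => t _; case/andP: (cb_prob_bounded R t 0) => e0 _.
by rewrite lee_fin mulr_ge0 //; case: (succ_distr m n1).
Qed.

Lemma FR_escape_le h c : h != [::] -> (last 0%N h <= 1)%N ->
  (forall m, succ_escape m (last 0%N h) <= c%:E)%E ->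
  (\esum_(t in [set: nat]) (sigma h t * cb_prob t 0)%:E <= c%:E)%E.
Proof.
case: h => [//|x r] _ /= hl succ_le.
have [mu_ge0 mu_sum] := memdist_distr T (belast x r); set mu := memdist _ in mu_ge0 mu_sum *.
have weight_ge0 m t : 0 <= succ m (last x r) t * cb_prob t 0.
  have [s_ge0 _] := succ_distr m hl; case/andP: (cb_prob_bounded R t 0) => e0 _.
  by rewrite mulr_ge0.
have -> : (\esum_(t in [set: nat]) (sigma (x :: r) t * cb_prob t 0)%:E =
    \esum_(t in [set: nat]) \sum_m ((mu m)%:E * (succ m (last x r) t * cb_prob t 0)%:E))%E.
  apply: eq_esum => t _; rewrite /= mulr_suml -sumEFin.
  by apply: eq_bigr => m _; rewrite -EFinM mulrA.
rewrite esum_sum => [|t m _ _]; last by rewrite mule_ge0 ?lee_fin.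
apply: (@le_trans _ _ (\sum_m (mu m * c)%:E)%E).
  apply: lee_sum => m _; apply: le_trans (esumZl_le (mu_ge0 m) _) _ => [t|].
    by rewrite lee_fin.
  by rewrite [X in (_ <= X)%E]EFinM; apply: lee_wpmul2l; [rewrite lee_fin | exact: succ_le].
by rewrite sumEFin -mulr_suml mu_sum mul1r.
Qed.

Lemma FR_escape_gap : exists2 delta, 0 < delta & forall h, h != [::] ->
  (last 0%N h <= 1)%N ->
  (\esum_(t in [set: nat]) (sigma h t * cb_prob t 0)%:E <= (1 - delta)%:E)%E.
Proof.
have [delta delta_gt0 delta_le] : exists2 delta, 0 < delta &
    forall m (i : 'I_2), delta <= 1 - fine (succ_escape m i).
  have := @fin_lb_gt0 _ _ (fun mi : Defs.Mem T * 'I_2 => 1 - fine (succ_escape mi.1 mi.2)).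
  case=> [[m i]|d d_gt0 d_le]; last by exists d => // m i; exact: (d_le (m, i)).
  by rewrite subr_gt0 -lte_fin fineK ?succ_escape_lt1 ?succ_escape_fin // -ltnS.
exists delta => // h hn hl; apply: FR_escape_le => // m.
rewrite -(fineK (succ_escape_fin _ hl)) lee_fin.
by move: (delta_le m (Ordinal (hl : last 0%N h < 2)%N)); rewrite lerBrDl -lerBrDr.
Qed.

End FR_strategies_are_risky.

Theorem theorem6 (R : realType) :
  exists (M : MDP R) (Col : St M -> nat) (s : St M),
    infinitely_branching M /\
    (forall x, (Col x <= 1)%N) /\
    (forall T : FRtransducer M, Prob (FR_strategy T) s (Parity Col) = 0%E) /\
    (exists T : HDtransducer M, Prob (HD_strategy T) s (Parity Col) = 1%E).
Proof.
exists (cb_mdp R), Col, 0%N; split; first exact: cb_infinitely_branching.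
split; first exact: Col_le1.
split=> [T|]; last by exists (HD_counter R); exact: HD_prob.
have [delta delta_gt0 escape_le] := FR_escape_gap T.
exact: risky_Parity_null (FR_strategy_bounded T) (@FR_moves_random _ T) delta_gt0 escape_le.
Qed.
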